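(* Let $f:\mathbb{E}\to\mathbb{R}\cup\{+\infty\}$ be a proper extended real function that is strongly pseudoconvex (in the Hadamard sense) at $\bar x\in\operatorname{dom} f$. Then $\bar x$ is an isolated local minimizer of second order of $f$ if and only if $0\in\partial^{(1)}_- f(\bar x)$.
   Context: $\mathbb{E}$ is a real finite-dimensional Euclidean space; $\operatorname{dom} f=\{x:f(x)<+\infty\}$. For $x\in\operatorname{dom} f$: $f^{(1)}_-(x;u)=\liminf_{t\downarrow 0,\,u'\to u} t^{-1}[f(x+tu')-f(x)]$ and $\partial^{(1)}_- f(x)=\{x^*\in L^1(\mathbb{E}) : x^*(u)\le f^{(1)}_-(x;u)\ \forall u\in\mathbb{E}\}$ ($L^1(\mathbb{E})$ = linear functionals). $f$ is strongly pseudoconvex at $\bar x\in\operatorname{dom} f$ iff for every $d\in\mathbb{E}$ with $\|d\|=1$ and $f^{(1)}_-(\bar x;d)=0$ there exist $\varepsilon>0$, $\delta>0$, $\alpha>0$ such that $f(\bar x+td')\ge f(\bar x)+\alpha t^2$ for all $t\in[0,\delta)$ and all $d'\in\mathbb{E}$ with $\|d'\|=1$, $\|d'-d\|<\varepsilon$. $\bar x$ is an isolated local minimizer of second order iff there exist a neighborhood $N$ of $\bar x$ and $C>0$ with $f(x)>f(\bar x)+C\|x-\bar x\|^2$ for all $x\in N\setminus\{\bar x\}$. *)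

From Stdlib Require Import Reals Lra Classical ClassicalEpsilon.
From Stdlib Require Fin.
Open Scope R_scope.

Definition vec (n : nat) := Fin.t n -> R.

Fixpoint fsum (n : nat) : (Fin.t n -> R) -> R :=
  match n with
  | O => fun _ => 0
  | S m => fun x => x Fin.F1 + fsum m (fun i => x (Fin.FS i))
  end.

Definition vadd {n} (x y : vec n) : vec n := fun i => x i + y i.
Definition vscale {n} (a : R) (x : vec n) : vec n := fun i => a * x i.
Definition vsub {n} (x y : vec n) : vec n := fun i => x i - y i.
Definition vzero {n} : vec n := fun _ => 0.
Definition vnorm {n} (x : vec n) : R := sqrt (fsum n (fun i => x i * x i)).

Inductive ERbar := Finite (r : R) | p_infty | m_infty.

Definition ERbar_le (x y : ERbar) : Prop :=
  match x, y with
  | m_infty, _ => True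
  | _, p_infty => True
  | Finite a, Finite b => a <= b
  | _, _ => False
  end.
Definition ERbar_lt (x y : ERbar) : Prop := ERbar_le x y /\ x <> y.

Definition is_glb (S : ERbar -> Prop) (l : ERbar) : Prop :=
  (forall y, S y -> ERbar_le l y) /\
  (forall m, (forall y, S y -> ERbar_le m y) -> ERbar_le m l).
Definition is_lub (S : ERbar -> Prop) (l : ERbar) : Prop :=
  (forall y, S y -> ERbar_le y l) /\
  (forall m, (forall y, S y -> ERbar_le y m) -> ERbar_le l m).

(** inf / sup in the complete lattice of extended reals (they always exist). *)
Definition ERbar_inf (S : ERbar -> Prop) : ERbar :=
  epsilon (inhabits p_infty) (is_glb S).
Definition ERbar_sup (S : ERbar -> Prop) : ERbar :=
  epsilon (inhabits p_infty) (is_lub S).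

Definition dom {n} (f : vec n -> ERbar) (x : vec n) : Prop :=
  exists r, f x = Finite r.
Definition proper {n} (f : vec n -> ERbar) : Prop :=
  (exists x, dom f x) /\ (forall x, f x <> m_infty).

Definition fval {n} (f : vec n -> ERbar) (x : vec n) : R :=
  match f x with Finite a => a | _ => 0 end.

Definition dquot {n} (f : vec n -> ERbar) (x : vec n) (t : R) (u' : vec n) : ERbar :=
  match f (vadd x (vscale t u')) with
  | Finite a => Finite ((a - fval f x) / t)
  | p_infty => p_infty
  | m_infty => m_infty
  end.

(** Lower Hadamard directional derivative
    f^(1)_-(x;u) = liminf_{t↓0, u'→u} t^{-1}[f(x+tu') - f(x)]
                 = sup_{eps>0} inf { quotient : 0<t<eps, ||u'-u||<eps }. *)
Definition lower_dini {n} (f : vec n -> ERbar) (x u : vec n) : ERbar :=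
  ERbar_sup (fun v => exists eps, 0 < eps /\
    v = ERbar_inf (fun w => exists t u', 0 < t < eps /\
           vnorm (vsub u' u) < eps /\ w = dquot f x t u')).

Definition is_linear_functional {n} (xs : vec n -> R) : Prop :=
  (forall u v, xs (vadd u v) = xs u + xs v) /\
  (forall a u, xs (vscale a u) = a * xs u).

Definition in_lower_subdiff {n} (f : vec n -> ERbar) (x : vec n) (xs : vec n -> R) : Prop :=
  is_linear_functional xs /\ forall u, ERbar_le (Finite (xs u)) (lower_dini f x u).

Definition strongly_pseudoconvex_at {n} (f : vec n -> ERbar) (xb : vec n) : Prop :=
  forall d : vec n, vnorm d = 1 -> lower_dini f xb d = Finite 0 ->
  exists eps delta alpha, 0 < eps /\ 0 < delta /\ 0 < alpha /\
    forall t d', 0 <= t < delta -> vnorm d' = 1 -> vnorm (vsub d' d) < eps ->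
      ERbar_le (Finite (fval f xb + alpha * t ^ 2)) (f (vadd xb (vscale t d'))).

Definition isolated_local_min_2 {n} (f : vec n -> ERbar) (xb : vec n) : Prop :=
  exists r C, 0 < r /\ 0 < C /\
    forall x, vnorm (vsub x xb) < r -> x <> xb ->
      ERbar_lt (Finite (fval f xb + C * (vnorm (vsub x xb)) ^ 2)) (f x).

(* If xb is an isolated minimizer of second order, f >= f(xb) near xb, so every difference
   quotient at xb is nonnegative and 0 lies in the lower Hadamard subdifferential.
   Conversely, if second-order growth fails there are points xb + t_k d_k, |d_k| = 1, t_k -> 0,
   with f(xb + t_k d_k) <= f(xb) + t_k^2/(k+1).  A cluster point d of the unit directions has
   f^(1)_-(xb; d) <= 0, hence = 0 when 0 is a subgradient; strong pseudoconvexity in direction d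
   then forces f(xb + t_k d_k) >= f(xb) + alpha t_k^2 for large k, a contradiction. *)

From Pilot Require Import Defs.
From Stdlib Require Import Reals Lra Lia Classical ClassicalEpsilon FunctionalExtensionality Rtopology.
Open Scope R_scope.

Definition vtail {n} (x : vec (S n)) : vec n := fun i => x (Fin.FS i).
Definition vcons {n} (a : R) (v : vec n) : vec (S n) :=
  fun i => Fin.caseS' i (fun _ => R) a v.

Lemma fsum_ext n (g h : Fin.t n -> R) : (forall i, g i = h i) -> fsum n g = fsum n h.
Proof.
  revert g h; induction n as [|n IH]; intros g h Hgh; simpl; [reflexivity|].
  rewrite Hgh; f_equal; apply IH; intro; apply Hgh.
Qed.

Lemma fsum_scale n (c : R) (g : Fin.t n -> R) : fsum n (fun i => c * g i) = c * fsum n g.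
Proof.
  revert g; induction n as [|n IH]; intro g; simpl; [ring|].
  rewrite (IH (fun i => g (Fin.FS i))); ring.
Qed.

Lemma fsum_sq_nonneg n (x : vec n) : 0 <= fsum n (fun i => x i * x i).
Proof.
  revert x; induction n as [|n IH]; intro x; simpl; [lra|].
  specialize (IH (vtail x)); unfold vtail in IH; nra.
Qed.

Lemma vnorm_nonneg n (x : vec n) : 0 <= vnorm x.
Proof. apply sqrt_pos. Qed.

Lemma vnorm_ext n (x y : vec n) : (forall i, x i = y i) -> vnorm x = vnorm y.
Proof. intro Hxy; unfold vnorm; f_equal; apply fsum_ext; intro i; rewrite Hxy; ring. Qed.

Lemma vnorm_head_tail n (x : vec (S n)) :
  vnorm x = sqrt (x Fin.F1 ^ 2 + vnorm (vtail x) ^ 2).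
Proof.
  unfold vnorm at 1; cbn [fsum]; f_equal.
  unfold vnorm; rewrite pow2_sqrt by apply fsum_sq_nonneg.
  unfold vtail; ring.
Qed.

Lemma vnorm_le_head_tail n (x : vec (S n)) : vnorm x <= Rabs (x Fin.F1) + vnorm (vtail x).
Proof.
  pose proof (Rabs_pos (x Fin.F1)); pose proof (vnorm_nonneg _ (vtail x)).
  rewrite vnorm_head_tail, <- (sqrt_pow2 (Rabs (x Fin.F1) + vnorm (vtail x))) by lra.
  apply sqrt_le_1_alt; rewrite <- (pow2_abs (x Fin.F1)); nra.
Qed.

Lemma Rabs_le_sqrt_sq_plus y z : 0 <= z -> Rabs y <= sqrt (y ^ 2 + z).
Proof.
  intro Hz; rewrite <- (sqrt_pow2 (Rabs y)) by apply Rabs_pos.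
  apply sqrt_le_1_alt; rewrite pow2_abs; lra.
Qed.

Lemma Rabs_coord_le_vnorm n (x : vec n) (i : Fin.t n) : Rabs (x i) <= vnorm x.
Proof.
  revert x i; induction n as [|n IH]; intros x i; [inversion i|].
  rewrite vnorm_head_tail; pattern i; apply Fin.caseS'.
  - apply Rabs_le_sqrt_sq_plus, pow2_ge_0.
  - intro j; apply (Rle_trans _ _ _ (IH (vtail x) j)).
    rewrite Rplus_comm; apply (Rle_trans _ _ _ (Rle_abs _)).
    apply Rabs_le_sqrt_sq_plus, pow2_ge_0.
Qed.

Lemma vnorm_scale n (a : R) (x : vec n) : vnorm (vscale a x) = Rabs a * vnorm x.
Proof.
  unfold vnorm, vscale.
  rewrite (fsum_ext n _ (fun i => (a * a) * (x i * x i))) by (intro; ring).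
  rewrite fsum_scale, sqrt_mult_alt by nra.
  f_equal; apply sqrt_Rsqr_abs.
Qed.

Lemma sqrt_sum_sq_triangle a b p q : 0 <= p -> 0 <= q ->
  sqrt ((a + b) ^ 2 + (p + q) ^ 2) <= sqrt (a ^ 2 + p ^ 2) + sqrt (b ^ 2 + q ^ 2).
Proof.
  intros Hp Hq.
  pose proof (sqrt_pos (a ^ 2 + p ^ 2)) as S1; pose proof (sqrt_pos (b ^ 2 + q ^ 2)) as S2.
  pose proof (pow2_sqrt (a ^ 2 + p ^ 2) ltac:(nra)) as E1.
  pose proof (pow2_sqrt (b ^ 2 + q ^ 2) ltac:(nra)) as E2.
  set (s1 := sqrt (a ^ 2 + p ^ 2)) in *; set (s2 := sqrt (b ^ 2 + q ^ 2)) in *.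
  assert (Hcs : a * b + p * q <= s1 * s2).
  { assert (Hsq : (a * b + p * q) ^ 2 <= (s1 * s2) ^ 2).
    { replace ((s1 * s2) ^ 2) with (s1 ^ 2 * s2 ^ 2) by ring; rewrite E1, E2.
      pose proof (pow2_ge_0 (a * q - b * p)); nra. }
    assert (0 <= s1 * s2) by nra; nra. }
  rewrite <- (sqrt_pow2 (s1 + s2)) by lra; apply sqrt_le_1_alt; nra.
Qed.

Lemma vnorm_triangle n (x y : vec n) : vnorm (vadd x y) <= vnorm x + vnorm y.
Proof.
  revert x y; induction n as [|n IH]; intros x y.
  - unfold vnorm; simpl; rewrite sqrt_0; lra.
  - rewrite !vnorm_head_tail.
    change (vtail (vadd x y)) with (vadd (vtail x) (vtail y)).
    pose proof (IH (vtail x) (vtail y)).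
    pose proof (vnorm_nonneg _ (vadd (vtail x) (vtail y))).
    pose proof (vnorm_nonneg _ (vtail x)); pose proof (vnorm_nonneg _ (vtail y)).
    eapply Rle_trans; [| apply sqrt_sum_sq_triangle; assumption].
    apply sqrt_le_1_alt; change (vadd x y Fin.F1) with (x Fin.F1 + y Fin.F1); nra.
Qed.

Lemma vnorm_le_sub n (x y : vec n) : vnorm x <= vnorm y + vnorm (vsub x y).
Proof.
  replace (vnorm x) with (vnorm (vadd y (vsub x y))); [apply vnorm_triangle|].
  apply vnorm_ext; intro; unfold vadd, vsub; ring.
Qed.

Lemma vnorm_sub_comm n (x y : vec n) : vnorm (vsub x y) = vnorm (vsub y x).
Proof. unfold vnorm; f_equal; apply fsum_ext; intro; unfold vsub; ring. Qed.

Lemma vnorm_sub_eq0 n (x y : vec n) : vnorm (vsub x y) = 0 -> x = y.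
Proof.
  intro H0; apply functional_extensionality; intro i.
  pose proof (Rabs_coord_le_vnorm n (vsub x y) i) as Hi; rewrite H0 in Hi; unfold vsub in Hi.
  destruct (Req_dec (x i - y i) 0) as [E|E]; [lra|].
  pose proof (Rabs_pos_lt _ E); lra.
Qed.

Lemma ERbar_le_trans x y z : ERbar_le x y -> ERbar_le y z -> ERbar_le x z.
Proof. destruct x, y, z; simpl; intros; try lra; tauto. Qed.

Lemma ERbar_le_antisym x y : ERbar_le x y -> ERbar_le y x -> x = y.
Proof. destruct x, y; simpl; intros; try tauto; f_equal; lra. Qed.

Lemma ERbar_le_p_infty x : ERbar_le x p_infty.
Proof. destruct x; simpl; auto. Qed.

Lemma ERbar_le_0_of_le_pos v : (forall c, 0 < c -> ERbar_le v (Finite c)) -> ERbar_le v (Finite 0).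
Proof.
  intro Hv; destruct v as [r| |]; simpl; auto.
  - destruct (Rle_dec r 0) as [|Hr]; auto.
    specialize (Hv (r / 2) ltac:(lra)); simpl in Hv; lra.
  - apply (Hv 1); lra.
Qed.

Lemma ERbar_not_lt_Finite z y :
  ~ ERbar_lt (Finite z) y -> y <> m_infty -> exists a, y = Finite a /\ a <= z.
Proof.
  intros Hnlt Hy; destruct y as [a| |]; [|exfalso|congruence].
  - exists a; split; auto.
    destruct (Rle_dec a z) as [|Ha]; auto; exfalso; apply Hnlt.
    split; simpl; [lra | intro E; injection E; lra].
  - apply Hnlt; split; simpl; auto; discriminate.
Qed.

Lemma is_lub_exists (S : ERbar -> Prop) : exists l, Defs.is_lub S l.
Proof.
  destruct (classic (S p_infty)) as [Hp|Hp].
  { exists p_infty; split; [intros; apply ERbar_le_p_infty | intros m Hm; apply Hm, Hp]. }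
  destruct (classic (exists r, S (Finite r))) as [[r0 Hr0]|Hr].
  - destruct (classic (exists M, forall r, S (Finite r) -> r <= M)) as [[M HM]|HM].
    + destruct (completeness (fun r => S (Finite r))) as [L [HL1 HL2]];
        [exists M; intros r Hr; apply HM, Hr | exists r0; exact Hr0|].
      exists (Finite L); split.
      * intros [y| |] Hy; simpl; auto; apply HL1, Hy.
      * intros [m| |] Hm; simpl; auto; [apply HL2; intros r Hr; exact (Hm _ Hr) | exact (Hm _ Hr0)].
    + exists p_infty; split; [intros; apply ERbar_le_p_infty|].
      intros [m| |] Hm; simpl; auto; [apply HM; exists m; intros r Hr; exact (Hm _ Hr) | exact (Hm _ Hr0)].
  - exists m_infty; split; [|intros; simpl; auto].
    intros [y| |] Hy; simpl; auto; apply Hr; eauto.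
Qed.

Definition ERbar_opp (x : ERbar) : ERbar :=
  match x with Finite r => Finite (- r) | p_infty => m_infty | m_infty => p_infty end.

Lemma ERbar_opp_involutive x : ERbar_opp (ERbar_opp x) = x.
Proof. destruct x; simpl; auto; f_equal; ring. Qed.

Lemma ERbar_opp_le x y : ERbar_le (ERbar_opp x) (ERbar_opp y) -> ERbar_le y x.
Proof. destruct x, y; simpl; auto; lra. Qed.

Lemma is_glb_exists (S : ERbar -> Prop) : exists l, Defs.is_glb S l.
Proof.
  destruct (is_lub_exists (fun y => S (ERbar_opp y))) as [L [HL1 HL2]].
  exists (ERbar_opp L); split.
  - intros y Hy; apply ERbar_opp_le; rewrite ERbar_opp_involutive.
    apply HL1; rewrite ERbar_opp_involutive; exact Hy.
  - intros m Hm; apply ERbar_opp_le; rewrite ERbar_opp_involutive; apply HL2.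
    intros y Hy; apply ERbar_opp_le; rewrite ERbar_opp_involutive; apply Hm, Hy.
Qed.

Lemma ERbar_inf_glb S : Defs.is_glb S (ERbar_inf S).
Proof. unfold ERbar_inf; apply epsilon_spec, is_glb_exists. Qed.

Lemma ERbar_sup_lub S : Defs.is_lub S (ERbar_sup S).
Proof. unfold ERbar_sup; apply epsilon_spec, is_lub_exists. Qed.

Lemma eventually_inv_succ_lt e : 0 < e -> exists N, forall k, (N <= k)%nat -> / (INR k + 1) < e.
Proof.
  intro He; destruct (archimed_cor1 e He) as [N [HN HN0]]; exists N; intros k Hk.
  apply (Rle_lt_trans _ (/ INR N)); [|exact HN].
  apply Rinv_le_contravar; [apply lt_0_INR; exact HN0|].
  apply le_INR in Hk; lra.
Qed.

Lemma inv_succ_pos k : 0 < / (INR k + 1).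
Proof. apply Rinv_0_lt_compat; pose proof (pos_INR k); lra. Qed.

Lemma ValAdh_subseq (h : nat -> R) (l : R) :
  ValAdh h l -> exists phi : nat -> nat, (forall j, (j <= phi j)%nat) /\ Un_cv (fun j => h (phi j)) l.
Proof.
  intro Hl.
  assert (Hclose : forall jN : nat * nat, exists p,
    (snd jN <= p)%nat /\ Rabs (h p - l) < / (INR (fst jN) + 1)).
  { intros [j N]; apply (Hl (fun y => Rabs (y - l) < / (INR j + 1)) N).
    exists (mkposreal _ (inv_succ_pos j)); intros y Hy; exact Hy. }
  destruct (choice _ Hclose) as [g Hg].
  set (phi := fix phi j := match j with O => g (O, O) | S j' => g (S j', S (phi j')) end).
  assert (Hphi : forall j, (j <= phi j)%nat /\ Rabs (h (phi j) - l) < / (INR j + 1)).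
  { induction j as [|j IH]; simpl; [split; [lia | apply (Hg (O, O))]|].
    destruct (Hg (S j, S (phi j))) as [Hle Hlt]; simpl in Hle; split; [lia | exact Hlt]. }
  exists phi; split; [intro j; apply Hphi|].
  intros e He; destruct (eventually_inv_succ_lt e He) as [N HN]; exists N; intros j Hj.
  apply (Rlt_trans _ _ _ (proj2 (Hphi j))), HN; lia.
Qed.

Definition cluster_point {n} (s : nat -> vec n) (y : vec n) : Prop :=
  forall eps, 0 < eps -> forall N, exists k, (N <= k)%nat /\ vnorm (vsub (s k) y) < eps.

Lemma bounded_cluster_point n (s : nat -> vec n) (M : R) :
  (forall k i, Rabs (s k i) <= M) -> exists y, cluster_point s y.
Proof.
  revert s; induction n as [|n IH]; intros s HM.
  - exists vzero; intros eps He N; exists N; split; [lia|].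
    unfold vnorm; simpl; rewrite sqrt_0; lra.
  - destruct (Bolzano_Weierstrass (fun k => s k Fin.F1) (fun c => -M <= c <= M)
      (compact_P3 (-M) M)) as [l Hl].
    { intro k; specialize (HM k Fin.F1).
      pose proof (Rle_abs (s k Fin.F1)); pose proof (Rle_abs (- s k Fin.F1)).
      rewrite Rabs_Ropp in *; lra. }
    destruct (ValAdh_subseq _ _ Hl) as [phi [Hphi Hconv]].
    destruct (IH (fun j => vtail (s (phi j)))) as [y Hy]; [intros; apply HM|].
    exists (vcons l y); intros eps He N.
    destruct (Hconv (eps / 2)) as [J HJ]; [lra|].
    destruct (Hy (eps / 2) ltac:(lra) (max N J)) as [j [Hj1 Hj2]].
    exists (phi j); split; [specialize (Hphi j); lia|].
    eapply Rle_lt_trans; [apply vnorm_le_head_tail|].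
    change (vtail (vsub (s (phi j)) (vcons l y))) with (vsub (vtail (s (phi j))) y).
    change (vsub (s (phi j)) (vcons l y) Fin.F1) with (s (phi j) Fin.F1 - l).
    specialize (HJ j ltac:(lia)); unfold R_dist in HJ; lra.
Qed.

Lemma cluster_point_vnorm n (s : nat -> vec n) (y : vec n) (r : R) :
  (forall k, vnorm (s k) = r) -> cluster_point s y -> vnorm y = r.
Proof.
  intros Hs Hy; apply Rle_antisym; apply Rle_plus_epsilon; intros eps He;
    destruct (Hy eps He O) as [k [_ Hk]]; rewrite <- (Hs k).
  - rewrite vnorm_sub_comm in Hk; pose proof (vnorm_le_sub _ y (s k)); lra.
  - pose proof (vnorm_le_sub _ (s k) y); lra.
Qed.

Lemma vnorm_sub_vadd_scale n (x u : vec n) (t : R) :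
  0 <= t -> vnorm (vsub (vadd x (vscale t u)) x) = t * vnorm u.
Proof.
  intro Ht; rewrite (vnorm_ext _ _ (vscale t u)) by (intro; unfold vadd, vsub, vscale; ring).
  rewrite vnorm_scale, Rabs_pos_eq; lra.
Qed.

Lemma polar_decomposition n (x xb : vec n) : x <> xb ->
  exists t d, 0 < t /\ vnorm d = 1 /\ vnorm (vsub x xb) = t /\ x = vadd xb (vscale t d).
Proof.
  intro Hne; set (t := vnorm (vsub x xb)).
  assert (Ht : 0 < t).
  { destruct (vnorm_nonneg _ (vsub x xb)) as [|E]; [assumption|].
    exfalso; apply Hne, vnorm_sub_eq0; symmetry; exact E. }
  exists t, (vscale (/ t) (vsub x xb)); repeat split; auto.
  - rewrite vnorm_scale, Rabs_pos_eq by (left; apply Rinv_0_lt_compat, Ht).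
    fold t; field; lra.
  - apply functional_extensionality; intro i; unfold vadd, vscale, vsub; field; lra.
Qed.

Lemma dquot_ge n (f : vec n -> ERbar) (x u : vec n) (t c : R) : 0 < t ->
  ERbar_le (Finite (fval f x + c * t)) (f (vadd x (vscale t u))) ->
  ERbar_le (Finite c) (dquot f x t u).
Proof.
  intros Ht; unfold dquot; destruct (f (vadd x (vscale t u))); simpl; auto.
  intro Hle; apply (Rmult_le_reg_r t); [exact Ht|]; unfold Rdiv.
  rewrite Rmult_assoc, Rinv_l by lra; lra.
Qed.

Lemma dquot_le n (f : vec n -> ERbar) (x u : vec n) (t c : R) : 0 < t ->
  ERbar_le (f (vadd x (vscale t u))) (Finite (fval f x + c * t)) ->
  ERbar_le (dquot f x t u) (Finite c).
Proof.
  intros Ht; unfold dquot; destruct (f (vadd x (vscale t u))); simpl; auto.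
  intro Hle; apply (Rmult_le_reg_r t); [exact Ht|]; unfold Rdiv.
  rewrite Rmult_assoc, Rinv_l by lra; lra.
Qed.

Lemma lower_dini_ge n (f : vec n -> ERbar) (x u : vec n) (c eps : R) : 0 < eps ->
  (forall t u', 0 < t < eps -> vnorm (vsub u' u) < eps -> ERbar_le (Finite c) (dquot f x t u')) ->
  ERbar_le (Finite c) (lower_dini f x u).
Proof.
  intros He Hq; unfold lower_dini.
  eapply ERbar_le_trans; [| apply (proj1 (ERbar_sup_lub _)); exists eps; split; [exact He | reflexivity]].
  apply (proj2 (ERbar_inf_glb _)); intros w [t [u' [Ht [Hu' ->]]]]; apply Hq; assumption.
Qed.

Lemma lower_dini_le_0 n (f : vec n -> ERbar) (x u : vec n) :
  (forall eps c, 0 < eps -> 0 < c -> exists t u',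
     0 < t < eps /\ vnorm (vsub u' u) < eps /\ ERbar_le (dquot f x t u') (Finite c)) ->
  ERbar_le (lower_dini f x u) (Finite 0).
Proof.
  intro Hq; unfold lower_dini; apply (proj2 (ERbar_sup_lub _)); intros v [eps [He ->]].
  apply ERbar_le_0_of_le_pos; intros c Hc.
  destruct (Hq eps c He Hc) as [t [u' [Ht [Hu' Hle]]]].
  eapply ERbar_le_trans; [apply (proj1 (ERbar_inf_glb _)); exists t, u'; auto | exact Hle].
Qed.

Lemma isolated_local_min_2_local_min n (f : vec n -> ERbar) (xb : vec n) :
  dom f xb -> isolated_local_min_2 f xb ->
  exists r, 0 < r /\ forall x, vnorm (vsub x xb) < r -> ERbar_le (Finite (fval f xb)) (f x).
Proof.
  intros [b Hb] [r [C [Hr [HC Hmin]]]]; exists r; split; [exact Hr|]; intros x Hx.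
  destruct (classic (x = xb)) as [->|Hne]; [unfold fval; rewrite Hb; simpl; lra|].
  destruct (Hmin x Hx Hne) as [Hle _].
  pose proof (pow2_ge_0 (vnorm (vsub x xb))).
  destruct (f x); simpl in *; auto; nra.
Qed.

Lemma local_min_lower_dini_nonneg n (f : vec n -> ERbar) (xb : vec n) (r : R) : 0 < r ->
  (forall x, vnorm (vsub x xb) < r -> ERbar_le (Finite (fval f xb)) (f x)) ->
  forall u, ERbar_le (Finite 0) (lower_dini f xb u).
Proof.
  intros Hr Hmin u; pose proof (vnorm_nonneg _ u) as Hu.
  set (eps := Rmin 1 (r / (vnorm u + 1))).
  assert (Heps : 0 < eps) by (apply Rmin_glb_lt; [lra | apply Rdiv_lt_0_compat; lra]).
  assert (Heps_r : eps * (vnorm u + 1) <= r).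
  { apply (Rle_trans _ (r / (vnorm u + 1) * (vnorm u + 1))); [|right; field; lra].
    apply Rmult_le_compat_r; [lra | apply Rmin_r]. }
  pose proof (Rmin_l 1 (r / (vnorm u + 1))) as Heps1; fold eps in Heps1.
  apply (lower_dini_ge _ _ _ _ _ eps Heps); intros t u' Ht Hu'.
  apply dquot_ge; [lra|]; rewrite Rmult_0_l, Rplus_0_r; apply Hmin.
  rewrite vnorm_sub_vadd_scale by lra.
  pose proof (vnorm_le_sub _ u' u); pose proof (vnorm_nonneg _ u'); nra.
Qed.

Lemma not_isolated_local_min_2 n (f : vec n -> ERbar) (xb : vec n) :
  proper f -> ~ isolated_local_min_2 f xb -> forall e, 0 < e ->
  exists t d, 0 < t < e /\ vnorm d = 1 /\
    ERbar_le (f (vadd xb (vscale t d))) (Finite (fval f xb + e * t ^ 2)).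
Proof.
  intros [_ Hfin] Hnot e He; apply NNPP; intro Hno; apply Hnot.
  exists e, e; split; [exact He|]; split; [exact He|]; intros x Hx Hne; apply NNPP; intro Hnlt.
  destruct (ERbar_not_lt_Finite _ _ Hnlt (Hfin x)) as [a [Ha Hale]].
  destruct (polar_decomposition _ _ _ Hne) as [t [d [Ht [Hd [Hnorm ->]]]]].
  apply Hno; exists t, d; rewrite Ha, <- Hnorm; simpl; lra.
Qed.

Section ApproachingSequence.

Variables (n : nat) (f : vec n -> ERbar) (xb : vec n) (t : nat -> R) (ds : nat -> vec n).
Hypothesis t_pos_small : forall k, 0 < t k < / (INR k + 1).
Hypothesis f_slow : forall k,
  ERbar_le (f (vadd xb (vscale (t k) (ds k)))) (Finite (fval f xb + / (INR k + 1) * t k ^ 2)).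

Lemma approaching_lower_dini_le_0 (d : vec n) :
  cluster_point ds d -> ERbar_le (lower_dini f xb d) (Finite 0).
Proof.
  intro Hd; apply lower_dini_le_0; intros eps c He Hc.
  destruct (eventually_inv_succ_lt (Rmin eps c)) as [N HN]; [apply Rmin_glb_lt; lra|].
  destruct (Hd eps He N) as [k [Hk Hdk]]; specialize (HN k Hk).
  pose proof (Rmin_l eps c); pose proof (Rmin_r eps c).
  pose proof (t_pos_small k); pose proof (inv_succ_pos k).
  assert (/ (INR k + 1) <= 1) by (rewrite <- Rinv_1; apply Rinv_le_contravar; pose proof (pos_INR k); lra).
  exists (t k), (ds k); split; [lra|]; split; [exact Hdk|].
  apply dquot_le; [lra|]; eapply ERbar_le_trans; [apply f_slow|]; simpl; nra.
Qed.

Lemma approaching_no_quadratic_growth (d : vec n) (eps delta alpha : R) :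
  cluster_point ds d -> (forall k, vnorm (ds k) = 1) -> 0 < eps -> 0 < delta -> 0 < alpha ->
  ~ (forall s d', 0 <= s < delta -> vnorm d' = 1 -> vnorm (vsub d' d) < eps ->
       ERbar_le (Finite (fval f xb + alpha * s ^ 2)) (f (vadd xb (vscale s d')))).
Proof.
  intros Hd Hunit He Hdel Hal Hgrowth.
  destruct (eventually_inv_succ_lt (Rmin delta alpha)) as [N HN]; [apply Rmin_glb_lt; lra|].
  destruct (Hd eps He N) as [k [Hk Hdk]]; specialize (HN k Hk).
  pose proof (Rmin_l delta alpha); pose proof (Rmin_r delta alpha); pose proof (t_pos_small k).
  pose proof (ERbar_le_trans _ _ _ (Hgrowth (t k) (ds k) ltac:(lra) (Hunit k) Hdk) (f_slow k)) as Hle.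
  simpl in Hle; assert (0 < t k ^ 2) by (apply pow_lt; lra); nra.
Qed.

End ApproachingSequence.

Lemma strongly_pseudoconvex_isolated_local_min_2 n (f : vec n -> ERbar) (xb : vec n) :
  proper f -> strongly_pseudoconvex_at f xb ->
  (forall u, ERbar_le (Finite 0) (lower_dini f xb u)) -> isolated_local_min_2 f xb.
Proof.
  intros Hprop Hspc Hnonneg; apply NNPP; intro Hnot.
  destruct (choice (fun k (p : R * vec n) => 0 < fst p < / (INR k + 1) /\ vnorm (snd p) = 1 /\
      ERbar_le (f (vadd xb (vscale (fst p) (snd p))))
        (Finite (fval f xb + / (INR k + 1) * fst p ^ 2)))) as [g Hg].
  { intro k; destruct (not_isolated_local_min_2 _ _ _ Hprop Hnot _ (inv_succ_pos k))
      as [t [d Htd]]; exists (t, d); exact Htd. }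
  set (t := fun k => fst (g k)); set (ds := fun k => snd (g k)).
  assert (Ht : forall k, 0 < t k < / (INR k + 1)) by (intro k; apply (Hg k)).
  assert (Hunit : forall k, vnorm (ds k) = 1) by (intro k; apply (Hg k)).
  assert (Hslow : forall k, ERbar_le (f (vadd xb (vscale (t k) (ds k))))
    (Finite (fval f xb + / (INR k + 1) * t k ^ 2))) by (intro k; apply (Hg k)).
  destruct (bounded_cluster_point n ds 1) as [d Hd].
  { intros k i; rewrite <- (Hunit k); apply Rabs_coord_le_vnorm. }
  assert (Hd1 : vnorm d = 1) by exact (cluster_point_vnorm _ _ _ _ Hunit Hd).
  assert (Hdini : lower_dini f xb d = Finite 0).
  { apply ERbar_le_antisym; [|apply Hnonneg].
    exact (approaching_lower_dini_le_0 n f xb t ds Ht Hslow d Hd). }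
  destruct (Hspc d Hd1 Hdini) as [eps [delta [alpha [He [Hdel [Hal Hgrowth]]]]]].
  exact (approaching_no_quadratic_growth n f xb t ds Ht Hslow d eps delta alpha
    Hd Hunit He Hdel Hal Hgrowth).
Qed.

Theorem theorem5 (n : nat) (f : vec n -> ERbar) (xb : vec n) :
  proper f -> dom f xb -> strongly_pseudoconvex_at f xb ->
  (isolated_local_min_2 f xb <-> in_lower_subdiff f xb (fun _ => 0)).
Proof.
  intros Hprop Hdom Hspc; split.
  - intro Hmin; split; [split; intros; ring|].
    destruct (isolated_local_min_2_local_min _ _ _ Hdom Hmin) as [r [Hr Hlocal]].
    exact (local_min_lower_dini_nonneg _ _ _ _ Hr Hlocal).
  - intros [_ Hnonneg]; exact (strongly_pseudoconvex_isolated_local_min_2 _ _ _ Hprop Hspc Hnonneg).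
Qed.
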